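(* In the standing setting, let $(A,B,R,\sigma)$ be a normalized context. If $\{(A_\lambda,B_\lambda,R_{A_\lambda\times B_\lambda},\sigma_{A_\lambda\times B_\lambda})\}_{\lambda\in\Lambda}$ is a decomposition of $(A,B,R,\sigma)$ into independent subcontexts, then $(\chi_{B_\lambda},\chi_{A_\lambda})\in\mathcal F_N$ for every $\lambda\in\Lambda$.
   Context: Adjoint triple: for posets $(P_1,\le_1),(P_2,\le_2),(P_3,\le_3)$, maps $\&\colon P_1\times P_2\to P_3$, $\swarrow\colon P_3\times P_2\to P_1$, $\nwarrow\colon P_3\times P_1\to P_2$ with $x\le_1 z\swarrow y \iff x\,\&\,y\le_3 z \iff y\le_2 z\nwarrow x$ for all $x,y,z$. For lower-bounded posets, $\&$ has zero-divisors if there are $x\ne\bot_1$, $y\neq\bot_2$ with $x\,\&\,y=\bot_3$. Standing setting: $(L_1,\preceq_1,\bot_1,\top_1)$ and $(L_2,\preceq_2,\bot_2,\top_2)$ are complete lattices and $(P,\le,\bot,\top)$ is a bounded poset. A multi-adjoint frame consists of adjoint triples $(\&_i,\swarrow^i,\nwarrow_i)$, $i=1,\dots,n$, with respect to $L_1,L_2,P$; a property-oriented frame consists of adjoint triples $(\&^p_j,\swarrow_p^j,\nwarrow^p_j)$, $j=1,\dots,m$, with respect to $P,L_2,L_1$; an object-oriented frame consists of adjoint triples $(\&^o_k,\swarrow_o^k,\nwarrow^o_k)$, $k=1,\dots,s$, with respect to $L_1,P,L_2$. All conjunctors $\&_i,\&^p_j,\&^o_k$ have no zero-divisors. A context $(A,B,R,\sigma)$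 consists of non-empty sets $A,B$, $R\colon A\times B\to P$, and maps $\sigma,\sigma_p,\sigma_o$ from $A\times B$ to the index sets of the three frames. It is normalized if every $a\in A$ has $b_1,b_2\in B$ with $R(a,b_1)\ne\bot$, $R(a,b_2)=\bot$, and every $b\in B$ has $a_1,a_2\in A$ with $R(a_1,b)\neq\bot$, $R(a_2,b)=\bot$. Fuzzy necessity operators: $g^{\uparrow_N}(a)=\inf\{g(b)\swarrow_o^{\sigma_o(a,b)}R(a,b)\mid b\in B\}$ for $g\in L_2^B$, and $f^{\downarrow^N}(b)=\inf\{f(a)\nwarrow^p_{\sigma_p(a,b)}R(a,b)\mid a\in A\}$ for $f\in L_1^A$. $\mathcal F_N=\{(g,f)\mid g\in L_2^B,\ f\in L_1^A,\ g^{\uparrow_N}=f,\ f^{\downarrow^N}=g\}$. For $X\subseteq B$, $\chi_X\in L_2^B$ takes value $\top_2$ on $X$ and $\bot_2$ elsewhere; for $Y\subseteq A$, $\chi_Y\in L_1^A$ takes value $\top_1$ on $Y$ and $\bot_1$ elsewhere. A separable subcontext of $(A,B,R,\sigma)$ is a tuple $(Y,X,R_{Y\times X},\sigma_{Y\times X})$ (restrictions of $R,\sigma$) with $Y\subseteq A$, $X\subseteq B$ non-empty, some $(a,b)\in Y\times X$ with $R(a,b)\ne\bot$, $R(a,b')=\bot$ for all $(a,b')\in Y\times(B\setminus X)$, and $R(a',b)=\bot$ for all $(a',b)\in(A\setminus Y)\times X$. A normalized context has a decomposition into independent subcontexts $\{(A_\lambda,B_\lambda,R_{A_\lambda\times B_\lambda},\sigma_{A_\lambda\times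 B_\lambda})\}_{\lambda\in\Lambda}$ ($\Lambda\ne\varnothing$) if each is a separable subcontext, $\{A_\lambda\}$ are pairwise disjoint with union $A$, $\{B_\lambda\}$ are pairwise disjoint with union $B$, and $\sigma$ assigns conjunctors without zero-divisors on $(A\setminus A_\lambda)\times B_\lambda$ and $A_\lambda\times(B\setminus B_\lambda)$ for all $\lambda$. *)

From Stdlib Require Import ClassicalDescription Fin.

Set Implicit Arguments.

Record Poset := {
  pcar :> Type;
  ple : pcar -> pcar -> Prop;
  ple_refl : forall x, ple x x;
  ple_antisym : forall x y, ple x y -> ple y x -> x = y;
  ple_trans : forall x y z, ple x y -> ple y z -> ple x z }.

Record BPoset := {
  bposet :> Poset;
  bbot : bposet;
  btop : bposet;
  bbot_least : forall x, ple bposet bbot x;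
  btop_greatest : forall x, ple bposet x btop }.

Definition is_inf (P : Poset) (S : P -> Prop) (m : P) : Prop :=
  (forall x, S x -> ple P m x) /\
  (forall y, (forall x, S x -> ple P y x) -> ple P y m).

Record CLattice := {
  lbposet :> BPoset;
  linf : (lbposet -> Prop) -> lbposet;
  linf_spec : forall S, is_inf lbposet S (linf S) }.

Definition adjoint_triple (P1 P2 P3 : Poset)
  (conj : P1 -> P2 -> P3) (sw : P3 -> P2 -> P1) (nw : P3 -> P1 -> P2) : Prop :=
  forall x y z,
    (ple P1 x (sw z y) <-> ple P3 (conj x y) z) /\
    (ple P3 (conj x y) z <-> ple P2 y (nw z x)).

Definition no_zero_divisors (P1 P2 P3 : BPoset) (conj : P1 -> P2 -> P3) : Prop :=
  ~ (exists x y, x <> bbot P1 /\ y <> bbot P2 /\ conj x y = bbot P3).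

Arguments adjoint_triple {P1 P2 P3}.
Arguments no_zero_divisors {P1 P2 P3}.

Definition chi (T : Type) (L : BPoset) (X : T -> Prop) : T -> L :=
  fun t => if excluded_middle_informative (X t) then btop L else bbot L.

Section Context.
Variables (L1 L2 : CLattice) (P : BPoset) (n m s : nat).
(* property-oriented frame: adjoint triples w.r.t. P, L2, L1 *)
Variable nwp : Fin.t m -> L1 -> P -> L2.
(* object-oriented frame: adjoint triples w.r.t. L1, P, L2 *)
Variable swo : Fin.t s -> L2 -> P -> L1.
Variables (A B : Type) (R : A -> B -> P)
  (sigma_p : A -> B -> Fin.t m) (sigma_o : A -> B -> Fin.t s).

Definition nec_up (g : B -> L2) : A -> L1 :=
  fun a => linf L1 (fun x => exists b, x = swo (sigma_o a b) (g b) (R a b)).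

Definition nec_down (f : A -> L1) : B -> L2 :=
  fun b => linf L2 (fun x => exists a, x = nwp (sigma_p a b) (f a) (R a b)).

Definition in_FN (g : B -> L2) (f : A -> L1) : Prop :=
  nec_up g = f /\ nec_down f = g.

Definition normalized : Prop :=
  (forall a, (exists b1, R a b1 <> bbot P) /\ (exists b2, R a b2 = bbot P)) /\
  (forall b, (exists a1, R a1 b <> bbot P) /\ (exists a2, R a2 b = bbot P)).

Definition separable_subcontext (Y : A -> Prop) (X : B -> Prop) : Prop :=
  (exists a, Y a) /\ (exists b, X b) /\
  (exists a b, Y a /\ X b /\ R a b <> bbot P) /\
  (forall a b', Y a -> ~ X b' -> R a b' = bbot P) /\
  (forall a' b, ~ Y a' -> X b -> R a' b = bbot P).
End Context.

Arguments normalized {P A B} R.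
Arguments separable_subcontext {P A B} R Y X.
Arguments nec_up {L1 L2 P s} swo {A B} R sigma_o g.
Arguments nec_down {L1 L2 P m} nwp {A B} R sigma_p f.
Arguments in_FN {L1 L2 P m s} nwp swo {A B} R sigma_p sigma_o g f.

(** In an object-oriented implication [g swo r] with
    [g] in [{bot, top}] there are only three cases: [top swo r = top],
    [bot swo bot = top], and, because the conjunctor has no zero-divisors,
    [bot swo r = bot] whenever [r <> bot].  Hence [chi_{B_l}^{up_N}(a)] is
    [top] exactly when no [b] outside [B_l] is related to [a], which by
    separability holds for [a] in [A_l]; for [a] outside [A_l], normality
    gives some [b] related to [a]; it lies in the block of [a], hence
    outside [B_l].  The other operator is the same construction for the transposed
    context and the flipped property-oriented triples. *)

From Stdlib Require Import Fin FunctionalExtensionality ClassicalDescription Classical.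

Set Implicit Arguments.

Lemma le_bbot_eq (P : BPoset) (x : P) : ple P x (bbot P) -> x = bbot P.
Proof. intros H. apply ple_antisym; [exact H | apply bbot_least]. Qed.

Lemma btop_le_eq (P : BPoset) (x : P) : ple P (btop P) x -> x = btop P.
Proof. intros H. apply ple_antisym; [apply btop_greatest | exact H]. Qed.

Lemma linf_all_top (L : CLattice) (S : L -> Prop) :
  (forall x, S x -> x = btop L) -> linf L S = btop L.
Proof.
  intros Htop. apply btop_le_eq, (proj2 (linf_spec L S)).
  intros x Sx. rewrite (Htop x Sx). apply ple_refl.
Qed.

Lemma linf_bot_mem (L : CLattice) (S : L -> Prop) :
  S (bbot L) -> linf L S = bbot L.
Proof. intros Sbot. apply le_bbot_eq, (proj1 (linf_spec L S)), Sbot. Qed.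

Lemma chi_in (T : Type) (L : BPoset) (X : T -> Prop) {t : T} :
  X t -> chi L X t = btop L.
Proof.
  intros Xt. unfold chi.
  destruct (excluded_middle_informative (X t)); [reflexivity | contradiction].
Qed.

Lemma chi_notin (T : Type) (L : BPoset) (X : T -> Prop) {t : T} :
  ~ X t -> chi L X t = bbot L.
Proof.
  intros nXt. unfold chi.
  destruct (excluded_middle_informative (X t)); [contradiction | reflexivity].
Qed.

Section AdjointTriple.

Context {P1 P2 P3 : BPoset} {conj : P1 -> P2 -> P3}
  {sw : P3 -> P2 -> P1} {nw : P3 -> P1 -> P2}.
Hypothesis Hadj : adjoint_triple conj sw nw.

Lemma adjoint_triple_flip : adjoint_triple (fun y x => conj x y) nw sw.
Proof.
  intros y x z. destruct (Hadj x y z) as [Hsw Hnw]. split.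
  - symmetry. exact Hnw.
  - symmetry. exact Hsw.
Qed.

Lemma no_zero_divisors_flip :
  no_zero_divisors conj -> no_zero_divisors (fun y x => conj x y).
Proof.
  intros Hnzd (y & x & Hy & Hx & Hyx). apply Hnzd. exists x, y. auto.
Qed.

Lemma adjoint_sw_top y : sw (btop P3) y = btop P1.
Proof. apply btop_le_eq, (proj2 (proj1 (Hadj _ y _))), btop_greatest. Qed.

Lemma adjoint_sw_bot_bot : sw (bbot P3) (bbot P2) = btop P1.
Proof.
  apply btop_le_eq, (proj2 (proj1 (Hadj _ _ _))).
  apply (proj2 (proj2 (Hadj _ _ _))), bbot_least.
Qed.

Lemma adjoint_sw_bot_nonzero y :
  no_zero_divisors conj -> y <> bbot P2 -> sw (bbot P3) y = bbot P1.
Proof.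
  intros Hnzd Hy. apply NNPP. intros Hsw. apply Hnzd.
  exists (sw (bbot P3) y), y. repeat split; auto.
  apply le_bbot_eq, (proj1 (proj1 (Hadj _ _ _))), ple_refl.
Qed.

End AdjointTriple.

Section NecessityOfCharacteristic.

Context {L1 L2 : CLattice} {P : BPoset} {s : nat}
  {conjo : Fin.t s -> L1 -> P -> L2} {swo : Fin.t s -> L2 -> P -> L1}
  {nwo : Fin.t s -> L2 -> L1 -> P}.
Hypothesis Hadjo : forall k, adjoint_triple (conjo k) (swo k) (nwo k).
Hypothesis Hnzdo : forall k, no_zero_divisors (conjo k).

Context {A B : Type} {R : A -> B -> P} {sigma_o : A -> B -> Fin.t s}
  {Y : A -> Prop} {X : B -> Prop}.
Hypothesis HRout : forall a b, Y a -> ~ X b -> R a b = bbot P.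
Hypothesis Hrow : forall a, ~ Y a -> exists b, ~ X b /\ R a b <> bbot P.

Lemma nec_up_chi : nec_up swo R sigma_o (chi L2 X) = chi L1 Y.
Proof.
  apply functional_extensionality. intros a. unfold nec_up.
  destruct (classic (Y a)) as [Ya | nYa].
  - rewrite (chi_in L1 Y Ya). apply linf_all_top. intros x [b ->].
    destruct (classic (X b)) as [Xb | nXb].
    + rewrite (chi_in L2 X Xb). apply (adjoint_sw_top (Hadjo _)).
    + rewrite (chi_notin L2 X nXb), (HRout Ya nXb).
      apply (adjoint_sw_bot_bot (Hadjo _)).
  - rewrite (chi_notin L1 Y nYa). apply linf_bot_mem.
    destruct (Hrow nYa) as (b & nXb & Rab). exists b.
    rewrite (chi_notin L2 X nXb). symmetry.
    apply (adjoint_sw_bot_nonzero (Hadjo _)); [apply Hnzdo | exact Rab].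
Qed.

End NecessityOfCharacteristic.

Lemma nec_down_transpose (L1 L2 : CLattice) (P : BPoset) (m : nat)
  (nwp : Fin.t m -> L1 -> P -> L2) (A B : Type) (R : A -> B -> P)
  (sigma_p : A -> B -> Fin.t m) (f : A -> L1) :
  nec_down nwp R sigma_p f
  = nec_up nwp (fun b a => R a b) (fun b a => sigma_p a b) f.
Proof. reflexivity. Qed.

Section Decomposition.

Context {P : BPoset} {A B : Type} {R : A -> B -> P}.

Lemma normalized_transpose : normalized R -> normalized (fun b a => R a b).
Proof. intros [Hrows Hcols]. split; assumption. Qed.

Lemma separable_subcontext_transpose (Y : A -> Prop) (X : B -> Prop) :
  separable_subcontext R Y X -> separable_subcontext (fun b a => R a b) X Y.
Proof.
  intros (HY & HX & (a & b & Ya & Xb & Rab) & Hout & Hin).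
  repeat split; auto. exists b, a. auto.
Qed.

Context {Lambda : Type} {Al : Lambda -> A -> Prop} {Bl : Lambda -> B -> Prop}.
Hypothesis Hnorm : normalized R.
Hypothesis Hsep : forall l, separable_subcontext R (Al l) (Bl l).
Hypothesis HAcov : forall a, exists l, Al l a.
Hypothesis HBdisj : forall l l' b, Bl l b -> Bl l' b -> l = l'.

Lemma decomposition_row_escape l a :
  ~ Al l a -> exists b, ~ Bl l b /\ R a b <> bbot P.
Proof.
  intros nAla. destruct (proj1 (proj1 Hnorm a)) as [b Rab].
  destruct (HAcov a) as [l' Al'a].
  assert (Bl'b : Bl l' b).
  { apply NNPP. intros nBl'b. apply Rab.
    destruct (Hsep l') as (_ & _ & _ & Hout & _). exact (Hout a b Al'a nBl'b). }
  exists b. split; [| exact Rab].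
  intros Blb. apply nAla. rewrite (HBdisj Blb Bl'b). exact Al'a.
Qed.

End Decomposition.

(* The hypotheses [Hsig1], [Hsig2] on [sigma] are subsumed by [Hnzdp], [Hnzdo]. *)
Theorem mainTheorem10
  (L1 L2 : CLattice) (P : BPoset) (n m s : nat)
  (* multi-adjoint frame: adjoint triples w.r.t. L1, L2, P *)
  (conj : Fin.t n -> L1 -> L2 -> P) (sw : Fin.t n -> P -> L2 -> L1)
  (nw : Fin.t n -> P -> L1 -> L2)
  (* property-oriented frame: adjoint triples w.r.t. P, L2, L1 *)
  (conjp : Fin.t m -> P -> L2 -> L1) (swp : Fin.t m -> L1 -> L2 -> P)
  (nwp : Fin.t m -> L1 -> P -> L2)
  (* object-oriented frame: adjoint triples w.r.t. L1, P, L2 *)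
  (conjo : Fin.t s -> L1 -> P -> L2) (swo : Fin.t s -> L2 -> P -> L1)
  (nwo : Fin.t s -> L2 -> L1 -> P)
  (Hadj : forall i, adjoint_triple (conj i) (sw i) (nw i))
  (Hadjp : forall j, adjoint_triple (conjp j) (swp j) (nwp j))
  (Hadjo : forall k, adjoint_triple (conjo k) (swo k) (nwo k))
  (Hnzd : forall i, no_zero_divisors (conj i))
  (Hnzdp : forall j, no_zero_divisors (conjp j))
  (Hnzdo : forall k, no_zero_divisors (conjo k))
  (* context (A, B, R, sigma) *)
  (A B : Type) (a0 : A) (b0 : B) (R : A -> B -> P)
  (sigma : A -> B -> Fin.t n) (sigma_p : A -> B -> Fin.t m)
  (sigma_o : A -> B -> Fin.t s)
  (Hnorm : normalized R)
  (* decomposition into independent subcontexts *)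
  (Lambda : Type) (lam0 : Lambda)
  (Al : Lambda -> A -> Prop) (Bl : Lambda -> B -> Prop)
  (Hsep : forall l, separable_subcontext R (Al l) (Bl l))
  (HAdisj : forall l l' a, Al l a -> Al l' a -> l = l')
  (HAcov : forall a, exists l, Al l a)
  (HBdisj : forall l l' b, Bl l b -> Bl l' b -> l = l')
  (HBcov : forall b, exists l, Bl l b)
  (Hsig1 : forall l a b, ~ Al l a -> Bl l b ->
     no_zero_divisors (conj (sigma a b)) /\ no_zero_divisors (conjp (sigma_p a b))
     /\ no_zero_divisors (conjo (sigma_o a b)))
  (Hsig2 : forall l a b, Al l a -> ~ Bl l b ->
     no_zero_divisors (conj (sigma a b)) /\ no_zero_divisors (conjp (sigma_p a b))
     /\ no_zero_divisors (conjo (sigma_o a b))) :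
  forall l : Lambda,
    in_FN nwp swo R sigma_p sigma_o (chi L2 (Bl l)) (chi L1 (Al l)).
Proof.
  intros l. split.
  - apply (nec_up_chi Hadjo Hnzdo).
    + destruct (Hsep l) as (_ & _ & _ & Hout & _). exact Hout.
    + exact (decomposition_row_escape Hnorm Hsep HAcov HBdisj l).
  - rewrite nec_down_transpose.
    apply (nec_up_chi (fun j => adjoint_triple_flip (Hadjp j))
                      (fun j => no_zero_divisors_flip (Hnzdp j))).
    + destruct (Hsep l) as (_ & _ & _ & _ & Hin).
      intros b a Blb nAla. exact (Hin a b nAla Blb).
    + exact (decomposition_row_escape (normalized_transpose Hnorm)
               (fun l' => separable_subcontext_transpose (Hsep l')) HBcov HAdisj l).
Qed.
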